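(* Let $Q_\infty=(q_0,q_1,q_2,\dots)$ be an infinite stochastic vector with positive coordinates, fix a GLS-expansion with cylinder lengths given by $Q_\infty$, and let $V=\{i_1,i_2,\dots,i_k,i_{k+1},\dots\}\subset\mathbb{N}_0$ be an infinite set. If the equation $\sum_{i\in V} q_i^x=1$ has no roots on $[0,1]$, then \[\dim_H\bigl(C[\mathit{GLS},V]\bigr)=\lim_{k\to\infty}\dim_H\bigl(C[\mathit{GLS},V_k]\bigr),\] where $V_k=\{i_1,i_2,\dots,i_k\}$, $k\in\mathbb{N}$, $k\ge 2$.
   Context: GLS-expansion: Let $Q_\infty=(q_0,q_1,\dots)$ be a stochastic vector with positive coordinates ($q_i>0$, $\sum_{i\ge 0} q_i=1$). Choose closed intervals $\Delta_i=[a_i,b_i]\subset[0,1]$, $i\in\mathbb{N}_0$, with pairwise disjoint interiors and $|\Delta_i|=q_i$ (cylinders of rank 1). Let $f_i:[0,1]\to\Delta_i$ be the increasing affine bijection. The cylinders of rank $n$ are $\Delta_{i_1i_2\dots i_n}=f_{i_1}\circ\dots\circ f_{i_n}([0,1])$, so the placement of $\Delta_{i_1\dots i_n}$ inside $\Delta_{i_1\dots i_{n-1}}$ is the same as that of $\Delta_{i_n}$ inside $[0,1]$ and $|\Delta_{i_1\dots i_n}|=q_{i_1}\cdots q_{i_n}$. For any sequence $(i_k)$ in $\mathbb{N}_0$, $\bigcap_k \Delta_{i_1\dots i_k}$ is a single point, denoted $\Delta^{\mathit{GLS}}_{i_1i_2\dots}$. For $W\subset\mathbb{N}_0$, $C[\mathit{GLS},W]=\{\Delta^{\mathit{GLS}}_{\alpha_1\alpha_2\dots}:\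 \alpha_k\in W \text{ for all } k\}$. *)

From Stdlib Require Import Reals.
From Coquelicot Require Import Coquelicot.
Open Scope R_scope.

(* diameter of a set (m_infty for the empty set, p_infty if unbounded) *)
Definition diam (U : R -> Prop) : Rbar :=
  Lub_Rbar (fun d => exists x y, U x /\ U y /\ d = Rabs (x - y)).

(* d^s for d >= 0 and s > 0 (convention 0^s = 0; only used with s > 0) *)
Definition powp (d s : R) : R := if Rle_dec d 0 then 0 else Rpower d s.

(* contribution |U|^s of a covering set; the empty set contributes 0 *)
Definition dterm (s : R) (U : R -> Prop) : R := powp (Rmax 0 (real (diam U))) s.

Definition hausdorff_delta (s delta : R) (E : R -> Prop) : Rbar :=
  Glb_Rbar (fun v => exists U : nat -> R -> Prop,
     (forall n, Rbar_le (diam (U n)) (Finite delta)) /\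
     (forall x, E x -> exists n, U n x) /\
     ex_series (fun n => dterm s (U n)) /\
     v = Series (fun n => dterm s (U n))).

Definition hausdorff_measure (s : R) (E : R -> Prop) : Rbar :=
  Lub_Rbar (fun v => exists delta, 0 < delta /\
                       Rbar_le (Finite v) (hausdorff_delta s delta E)).

(* dim_H E = inf { s > 0 : H^s(E) = 0 } (finite, in [0,1], for E ⊆ [0,1]) *)
Definition dimH (E : R -> Prop) : R :=
  real (Glb_Rbar (fun s => 0 < s /\ hausdorff_measure s E = Finite 0)).

(* Rank-1 cylinders Delta_i = [a i, a i + q i]; f_i x = a i + q i * x. *)
Definition gls_f (q a : nat -> R) (i : nat) (x : R) : R := a i + q i * x.

Fixpoint gls_comp (q a : nat -> R) (alpha : nat -> nat) (n : nat) (x : R) : R :=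
  match n with
  | O => x
  | S m => gls_comp q a alpha m (gls_f q a (alpha m) x)
  end.

Definition gls_cyl (q a : nat -> R) (alpha : nat -> nat) (n : nat) (y : R) : Prop :=
  exists t, 0 <= t <= 1 /\ y = gls_comp q a alpha n t.

Definition GLS_set (q a : nat -> R) (W : nat -> Prop) (x : R) : Prop :=
  exists alpha : nat -> nat, (forall k, W (alpha k)) /\
                             (forall n, gls_cyl q a alpha n x).

(* Upper bound: C[GLS, V] is the union of its images under the maps f_i, i in V. Replacing a
   delta-cover (U_n) by the sets f_i(U_n) for i < N together with the cylinders Delta_i for i >= N
   multiplies its s-mass by about sum_(i in V) q_i^s; when this sum is < 1, iterating shows that
   C[GLS, V] is H^s-null.
   Lower bound: for finite F with sum_(i in F) q_i^s >= 1, C[GLS, F] is not H^s'-null for s' < s.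
   The stopping-time cylinders (the first Delta_u of length <= d) meeting a set of diameter d have
   total s'-mass O(d^s'), while by Konig's lemma finitely many of the cylinders attached to a cover
   cover every infinite path, and then carry total s'-mass at least 1.
   If dim_H C[GLS, V_k] <= L < dim_H C[GLS, V] for all k, then at any s in (L, dim_H C[GLS, V])
   every sum over V_k is < 1, so sum_(i in V) q_i^s <= 1; since all q_i are bounded by some r < 1,
   the sum is < 1 at a slightly larger exponent, contradicting the upper bound. *)

From Stdlib Require Import Reals.
From Coquelicot Require Import Coquelicot.
Open Scope R_scope.
From Stdlib Require Import Lra Lia List Classical ClassicalDescription IndefiniteDescription Wf_nat.
From Stdlib Require FinFun.
Import ListNotations.

(** * Finite sums and real powers *)

Fixpoint psum (u : nat -> R) (n : nat) : R :=
  match n with O => 0 | S m => psum u m + u m end.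

Lemma sum_n_psum u n : sum_n u n = psum u (S n).
Proof.
  induction n as [|n IH]; simpl.
  - rewrite sum_O. lra.
  - rewrite sum_Sn, IH. reflexivity.
Qed.

Section PartialSums.

Variable u : nat -> R.

Lemma psum_nonneg n : (forall k, 0 <= u k) -> 0 <= psum u n.
Proof. intros Hu; induction n; simpl; [lra|]. specialize (Hu n); lra. Qed.

Lemma psum_le_psum m n : (forall k, 0 <= u k) -> (m <= n)%nat -> psum u m <= psum u n.
Proof. intros Hu Hmn; induction Hmn; simpl; [lra|]. specialize (Hu m0); lra. Qed.

Lemma term_le_psum n k : (forall k, 0 <= u k) -> (k < n)%nat -> u k <= psum u n.
Proof.
  intros Hu Hk. apply Rle_trans with (psum u (S k)).
  - simpl. pose proof (psum_nonneg k Hu). lra.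
  - apply psum_le_psum; auto.
Qed.

Lemma two_terms_le_psum n i j :
  (forall k, 0 <= u k) -> (i < j)%nat -> (j < n)%nat -> u i + u j <= psum u n.
Proof.
  intros Hu Hij Hj. apply Rle_trans with (psum u (S j)).
  - simpl. pose proof (term_le_psum j i Hu Hij). lra.
  - apply psum_le_psum; auto.
Qed.

Lemma psum_add m n : psum u (m + n) = psum u m + psum (fun k => u (m + k)%nat) n.
Proof.
  induction n as [|n IH]; simpl.
  - rewrite Nat.add_0_r; lra.
  - rewrite Nat.add_succ_r. simpl. rewrite IH. lra.
Qed.

Lemma psum_blocks m b : psum u (m * b) = psum (fun k => psum (fun j => u (k * b + j)%nat) b) m.
Proof.
  induction m as [|m IH]; simpl; auto.
  replace (b + m * b)%nat with (m * b + b)%nat by lia. rewrite psum_add, IH. reflexivity.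
Qed.

Lemma psum_le_Series n : (forall k, 0 <= u k) -> ex_series u -> psum u n <= Series u.
Proof.
  intros Hu [l Hl]. rewrite (is_series_unique _ _ Hl).
  apply Rle_trans with (psum u (S n)); [apply psum_le_psum; auto|].
  rewrite <- sum_n_psum. apply (is_lim_seq_incr_compare (sum_n u)); [exact Hl|].
  intros k. rewrite !sum_n_psum. apply psum_le_psum; auto.
Qed.

Lemma Series_nonneg : (forall k, 0 <= u k) -> ex_series u -> 0 <= Series u.
Proof. intros Hu Hex. apply Rle_trans with (psum u 0); [simpl; lra|]. apply psum_le_Series; auto. Qed.

Lemma ex_series_of_psum_le (B : R) :
  (forall k, 0 <= u k) -> (forall n, psum u n <= B) -> ex_series u /\ Series u <= B.
Proof.
  intros Hu HB.
  assert (Hincr : forall n, sum_n u n <= sum_n u (S n)).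
  { intros n. rewrite !sum_n_psum. apply psum_le_psum; auto. }
  destruct (ex_lim_seq_incr _ Hincr) as [l Hl].
  assert (Hup : Rbar_le l B).
  { refine (is_lim_seq_le _ _ l B _ Hl (is_lim_seq_const B)).
    intros n. rewrite sum_n_psum. apply HB. }
  assert (Hlow : Rbar_le (sum_n u 0) l).
  { refine (is_lim_seq_le _ _ _ l _ (is_lim_seq_const (sum_n u 0)) Hl).
    intros n. rewrite !sum_n_psum. apply psum_le_psum; auto; lia. }
  destruct l as [l| |]; simpl in Hup, Hlow; try contradiction.
  split; [exists l; exact Hl|]. rewrite (is_series_unique u l Hl). exact Hup.
Qed.

End PartialSums.

Lemma psum_le u v n : (forall k, (k < n)%nat -> u k <= v k) -> psum u n <= psum v n.
Proof.
  intros H; induction n; simpl; [lra|].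
  assert (psum u n <= psum v n) by (apply IHn; intros; apply H; lia).
  specialize (H n ltac:(lia)). lra.
Qed.

Lemma psum_plus u v n : psum (fun k => u k + v k) n = psum u n + psum v n.
Proof. induction n; simpl; lra. Qed.

Lemma psum_scal c u n : psum (fun k => c * u k) n = c * psum u n.
Proof. induction n; simpl; [lra|]. rewrite IHn; lra. Qed.

Lemma psum_half_pow n : psum (fun k => (/2) ^ S k) n = 1 - (/2) ^ n.
Proof. induction n; [simpl; lra|]. cbn [psum]. rewrite IHn. simpl. field. Qed.

Lemma psum_first_terms_const (p : R) n0 n :
  psum (fun k => if Nat.leb k n0 then p else 0) n = INR (Nat.min n (S n0)) * p.
Proof.
  induction n as [|n IH]; [simpl; lra|]. cbn [psum]. rewrite IH.
  destruct (Nat.leb_spec n n0).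
  - replace (Nat.min (S n) (S n0)) with (S n) by lia.
    replace (Nat.min n (S n0)) with n by lia. rewrite (S_INR n). lra.
  - replace (Nat.min (S n) (S n0)) with (S n0) by lia.
    replace (Nat.min n (S n0)) with (S n0) by lia. lra.
Qed.

Definition lsum {T} (f : T -> R) (l : list T) : R := fold_right (fun t acc => f t + acc) 0 l.

Section ListSums.

Context {T : Type}.
Implicit Types (f g : T -> R) (l : list T).

Lemma lsum_nil f : lsum f [] = 0.
Proof. reflexivity. Qed.

Lemma lsum_cons f t l : lsum f (t :: l) = f t + lsum f l.
Proof. reflexivity. Qed.

Lemma lsum_app f l1 l2 : lsum f (l1 ++ l2) = lsum f l1 + lsum f l2.
Proof. induction l1; [simpl; lra|]. simpl app. rewrite !lsum_cons, IHl1. lra. Qed.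

Lemma lsum_filter f (p : T -> bool) l :
  lsum f l = lsum f (filter p l) + lsum f (filter (fun t => negb (p t)) l).
Proof.
  induction l as [|t l IH]; [simpl; lra|].
  cbn [filter]; destruct (p t); cbn [negb]; rewrite !lsum_cons, IH; lra.
Qed.

Lemma lsum_le f g l : (forall t, In t l -> f t <= g t) -> lsum f l <= lsum g l.
Proof.
  induction l as [|t l IH]; intros H; [simpl; lra|]. rewrite !lsum_cons.
  assert (f t <= g t) by (apply H; simpl; auto).
  assert (lsum f l <= lsum g l) by (apply IH; intros; apply H; simpl; auto). lra.
Qed.

Lemma lsum_zero f l : (forall t, In t l -> f t = 0) -> lsum f l = 0.
Proof.
  induction l as [|t l IH]; intros H; [reflexivity|]. rewrite lsum_cons, IH, H; simpl; auto.
  - lra.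
  - intros; apply H; simpl; auto.
Qed.

Lemma lsum_nonneg f l : (forall t, In t l -> 0 <= f t) -> 0 <= lsum f l.
Proof.
  intros H. rewrite <- (lsum_zero (fun _ => 0) l) by auto. apply lsum_le; auto.
Qed.

Lemma lsum_scal (c : R) f l : lsum (fun t => c * f t) l = c * lsum f l.
Proof. induction l; [rewrite !lsum_nil; lra|]. rewrite !lsum_cons, IHl; lra. Qed.

Lemma lsum_plus f g l : lsum (fun t => f t + g t) l = lsum f l + lsum g l.
Proof. induction l; [rewrite !lsum_nil; lra|]. rewrite !lsum_cons, IHl; lra. Qed.

Lemma term_le_lsum f l t : (forall t, In t l -> 0 <= f t) -> In t l -> f t <= lsum f l.
Proof.
  intros H Ht. destruct (in_split t l Ht) as (l1 & l2 & ->).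
  rewrite lsum_app, lsum_cons.
  assert (0 <= lsum f l1) by (apply lsum_nonneg; intros; apply H, in_or_app; auto).
  assert (0 <= lsum f l2) by (apply lsum_nonneg; intros; apply H, in_or_app; simpl; auto).
  lra.
Qed.

Lemma lsum_incl f l1 l2 :
  (forall t, 0 <= f t) -> NoDup l1 -> incl l1 l2 -> lsum f l1 <= lsum f l2.
Proof.
  intros Hf Hnd. revert l2. induction Hnd as [|t l1 Ht Hnd IH]; intros l2 Hinc.
  - apply lsum_nonneg; auto.
  - destruct (in_split t l2 (Hinc t (or_introl eq_refl))) as (A & B & ->).
    rewrite lsum_cons, lsum_app, lsum_cons.
    assert (lsum f l1 <= lsum f (A ++ B)).
    { apply IH. intros y Hy. assert (Hy2 := Hinc y (or_intror Hy)).
      apply in_app_or in Hy2 as [Hy2|[Hy2|Hy2]]; try (apply in_or_app; auto).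
      subst; contradiction. }
    rewrite lsum_app in H. lra.
Qed.

Lemma lsum_concat (Ls : nat -> list T) f n :
  lsum f (concat (map Ls (seq 0 n))) = psum (fun k => lsum f (Ls k)) n.
Proof.
  induction n as [|n IH]; [reflexivity|].
  rewrite seq_S, map_app, concat_app, lsum_app, IH. simpl. rewrite app_nil_r. reflexivity.
Qed.

End ListSums.

Lemma psum_filter (p : nat -> bool) h n :
  psum (fun i => if p i then h i else 0) n = lsum h (filter p (seq 0 n)).
Proof.
  induction n as [|n IH]; [reflexivity|].
  rewrite seq_S, filter_app, lsum_app, <- IH. simpl.
  destruct (p n); simpl; rewrite ?lsum_cons; simpl; lra.
Qed.

Lemma exp_le_exp x y : x <= y -> exp x <= exp y.
Proof. intros [H|H]; [left; apply exp_increasing; auto | subst; lra]. Qed.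

Lemma Rpower_pos x s : 0 < Rpower x s.
Proof. apply exp_pos. Qed.

Lemma Rpower_1_base s : Rpower 1 s = 1.
Proof. unfold Rpower. rewrite ln_1, Rmult_0_r, exp_0. reflexivity. Qed.

Lemma Rpower_antitone_base x y e : 0 < x <= y -> e <= 0 -> Rpower y e <= Rpower x e.
Proof.
  intros [Hx Hxy] He. unfold Rpower. apply exp_le_exp.
  assert (ln x <= ln y) by (apply ln_le; auto). nra.
Qed.

Lemma Rpower_antitone_exp x s s' : 0 < x <= 1 -> s' <= s -> Rpower x s <= Rpower x s'.
Proof.
  intros Hx Hs. unfold Rpower. apply exp_le_exp.
  assert (ln x <= 0) by (rewrite <- ln_1; apply ln_le; lra). nra.
Qed.

Lemma Rpower_lt_1 x e : 0 < x < 1 -> 0 < e -> Rpower x e < 1.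
Proof.
  intros Hx He. unfold Rpower. rewrite <- exp_0. apply exp_increasing.
  assert (ln x < 0) by (rewrite <- ln_1; apply ln_increasing; lra). nra.
Qed.

Lemma Rpower_split x s : 0 < x -> Rpower x s = x * Rpower x (s - 1).
Proof. intros Hx. replace s with (1 + (s - 1)) at 1 by ring. rewrite Rpower_plus, Rpower_1; auto. Qed.

(** * Hausdorff dimension through null sets *)

Lemma diam_ge (U : R -> Prop) x y : U x -> U y -> Rbar_le (Rabs (x - y)) (diam U).
Proof. intros Hx Hy. apply Lub_Rbar_correct. exists x, y. auto. Qed.

Lemma diam_le (U : R -> Prop) (t : R) :
  (forall x y, U x -> U y -> Rabs (x - y) <= t) -> Rbar_le (diam U) t.
Proof. intros H. apply Lub_Rbar_correct. intros d (x & y & Hx & Hy & ->). apply H; auto. Qed.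

Lemma diam_empty (U : R -> Prop) : (forall x, ~ U x) -> diam U = m_infty.
Proof.
  intros H. apply is_lub_Rbar_unique. split.
  - intros d (x & _ & Hx & _). exfalso; eapply H; eauto.
  - intros b _. destruct b; simpl; auto.
Qed.

Lemma diam_finite (U : R -> Prop) x0 (d : R) :
  U x0 -> Rbar_le (diam U) d -> exists t, diam U = Finite t /\ 0 <= t <= d.
Proof.
  intros Hx Hd. pose proof (diam_ge U x0 x0 Hx Hx) as Hg.
  rewrite Rminus_diag, Rabs_R0 in Hg.
  destruct (diam U) as [t| |]; simpl in *; try contradiction. exists t; auto.
Qed.

Lemma powp_nonneg d s : 0 <= powp d s.
Proof. unfold powp. destruct (Rle_dec d 0); [lra|]. left; apply Rpower_pos. Qed.

Lemma powp_pos d s : 0 < d -> powp d s = Rpower d s.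
Proof. intros H. unfold powp. destruct (Rle_dec d 0); [lra|auto]. Qed.

Lemma powp_le d1 d2 s : 0 <= s -> d1 <= d2 -> powp d1 s <= powp d2 s.
Proof.
  intros Hs H. unfold powp. destruct (Rle_dec d1 0), (Rle_dec d2 0).
  - lra.
  - left; apply Rpower_pos.
  - lra.
  - apply Rle_Rpower_l; lra.
Qed.

Lemma dterm_nonneg s U : 0 <= dterm s U.
Proof. apply powp_nonneg. Qed.

Lemma dterm_empty s U : (forall x, ~ U x) -> dterm s U = 0.
Proof.
  intros H. unfold dterm. rewrite (diam_empty U H). simpl.
  rewrite Rmax_left by lra. unfold powp. destruct (Rle_dec 0 0); lra.
Qed.

Lemma dterm_finite s U t : diam U = Finite t -> 0 <= t -> dterm s U = powp t s.
Proof. intros E Ht. unfold dterm. rewrite E. simpl. rewrite Rmax_right; auto. Qed.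

Lemma dterm_le s U t : 0 <= s -> 0 <= t ->
  (forall x y, U x -> U y -> Rabs (x - y) <= t) -> dterm s U <= powp t s.
Proof.
  intros Hs Ht H.
  destruct (classic (exists x, U x)) as [[x0 Hx]|Hn].
  - destruct (diam_finite U x0 t Hx (diam_le U t H)) as (t' & E & Ht').
    rewrite (dterm_finite s U t' E) by lra. apply powp_le; lra.
  - rewrite dterm_empty by eauto. apply powp_nonneg.
Qed.

Definition is_cover (s delta : R) (E : R -> Prop) (U : nat -> R -> Prop) : Prop :=
  (forall n, Rbar_le (diam (U n)) delta) /\
  (forall x, E x -> exists n, U n x) /\
  ex_series (fun n => dterm s (U n)).

Definition hnull (s : R) (E : R -> Prop) : Prop :=
  forall delta, 0 < delta -> forall eps, 0 < eps ->
    exists U, is_cover s delta E U /\ Series (fun n => dterm s (U n)) <= eps.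

Lemma hausdorff_delta_le_cover s delta E U :
  is_cover s delta E U -> Rbar_le (hausdorff_delta s delta E) (Series (fun n => dterm s (U n))).
Proof. intros (H1 & H2 & H3). apply Glb_Rbar_correct. exists U. auto. Qed.

Lemma hausdorff_delta_nonneg s delta E : Rbar_le 0 (hausdorff_delta s delta E).
Proof.
  apply Glb_Rbar_correct. intros v (U & _ & _ & Hex & ->).
  apply Series_nonneg; auto using dterm_nonneg.
Qed.

Lemma cover_of_hausdorff_delta_lt s delta E (eps : R) :
  Rbar_lt (hausdorff_delta s delta E) eps ->
  exists U, is_cover s delta E U /\ Series (fun n => dterm s (U n)) <= eps.
Proof.
  intros Hlt. apply NNPP. intros Hno. apply (Rbar_lt_not_le _ _ Hlt).
  apply Glb_Rbar_correct. intros v (U & H1 & H2 & H3 & ->). simpl.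
  apply Rnot_lt_le. intros Hv. apply Hno. exists U. split; [split; auto|lra].
Qed.

Lemma hausdorff_measure_eq_0 s E : hausdorff_measure s E = Finite 0 <-> hnull s E.
Proof.
  split.
  - intros H0 delta Hd eps He. apply cover_of_hausdorff_delta_lt.
    apply Rbar_not_le_lt. intros Hle.
    assert (Hub : Rbar_le eps (hausdorff_measure s E)).
    { apply Lub_Rbar_correct. exists delta. auto. }
    rewrite H0 in Hub. simpl in Hub. lra.
  - intros Hn. apply is_lub_Rbar_unique. split.
    + intros v (delta & Hd & Hv). apply Rbar_le_trans with (1 := Hv).
      destruct (hausdorff_delta s delta E) as [h| |] eqn:Eh; simpl; auto.
      * apply Rnot_lt_le. intros Hh.
        destruct (Hn delta Hd (h / 2) ltac:(lra)) as (U & HU & HS).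
        pose proof (hausdorff_delta_le_cover _ _ _ _ HU) as X. rewrite Eh in X. simpl in X. lra.
      * destruct (Hn delta Hd 1 ltac:(lra)) as (U & HU & _).
        pose proof (hausdorff_delta_le_cover _ _ _ _ HU) as X. rewrite Eh in X. exact X.
    + intros b Hb. apply (Hb 0). exists 1. split; [lra|]. apply hausdorff_delta_nonneg.
Qed.

Lemma hnull_subset s (E E' : R -> Prop) : (forall x, E x -> E' x) -> hnull s E' -> hnull s E.
Proof.
  intros Hsub H delta Hd eps He. destruct (H delta Hd eps He) as (U & (H1 & H2 & H3) & H4).
  exists U. repeat split; auto.
Qed.

Section HausdorffDimension.

Variable E : R -> Prop.

Let null_exponents (s : R) : Prop := 0 < s /\ hnull s E.

Lemma dimH_Glb : dimH E = real (Glb_Rbar null_exponents).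
Proof.
  unfold dimH. f_equal. apply Glb_Rbar_eqset. intros s. unfold null_exponents.
  rewrite hausdorff_measure_eq_0. tauto.
Qed.

Lemma Glb_null_exponents_finite s0 : 0 < s0 -> hnull s0 E ->
  exists g, Glb_Rbar null_exponents = Finite g /\ 0 <= g /\ forall s, null_exponents s -> g <= s.
Proof.
  intros Hs0 Hn0. destruct (Glb_Rbar_correct null_exponents) as [Hlb Hglb].
  assert (A : Rbar_le 0 (Glb_Rbar null_exponents)) by (apply Hglb; intros x [Hx _]; simpl; lra).
  pose proof (Hlb s0 (conj Hs0 Hn0)) as B.
  destruct (Glb_Rbar null_exponents) as [g| |]; simpl in A, B; try contradiction.
  exists g. split; [reflexivity|]. split; [exact A|]. intros s Hs. apply (Hlb s Hs).
Qed.

Lemma dimH_le_of_hnull s : 0 < s -> hnull s E -> dimH E <= s.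
Proof.
  intros Hs Hn. rewrite dimH_Glb. destruct (Glb_null_exponents_finite s Hs Hn) as (g & -> & _ & H).
  apply H. split; auto.
Qed.

Lemma dimH_nonneg s0 : 0 < s0 -> hnull s0 E -> 0 <= dimH E.
Proof.
  intros Hs Hn. rewrite dimH_Glb. destruct (Glb_null_exponents_finite s0 Hs Hn) as (g & -> & H & _). exact H.
Qed.

Lemma dimH_ge s0 t : 0 < s0 -> hnull s0 E ->
  (forall s, 0 < s -> hnull s E -> t <= s) -> t <= dimH E.
Proof.
  intros Hs Hn H. rewrite dimH_Glb.
  destruct (Glb_null_exponents_finite s0 Hs Hn) as (g & Eg & _ & _).
  assert (X : Rbar_le t (Glb_Rbar null_exponents)) by (apply Glb_Rbar_correct; intros x [Hx1 Hx2]; apply H; auto).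
  rewrite Eg in X |- *. exact X.
Qed.

End HausdorffDimension.

Lemma dimH_subset (E E' : R -> Prop) s0 : (forall x, E x -> E' x) -> 0 < s0 -> hnull s0 E' ->
  dimH E <= dimH E'.
Proof.
  intros Hsub Hs Hn. apply (dimH_ge E' s0); auto.
  intros s Hs' Hn'. apply dimH_le_of_hnull; auto. eapply hnull_subset; eauto.
Qed.

(** * Words, prefix covers and Konig's lemma *)

Fixpoint wprod (w : nat -> R) (u : list nat) : R :=
  match u with [] => 1 | i :: u' => w i * wprod w u' end.

Lemma wprod_app w u v : wprod w (u ++ v) = wprod w u * wprod w v.
Proof. induction u as [|i u IH]; simpl; [lra|]. rewrite IH; ring. Qed.

Lemma wprod_pos w u : (forall i, 0 < w i) -> 0 < wprod w u.
Proof. intros H; induction u; simpl; [lra|]. apply Rmult_lt_0_compat; auto. Qed.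

Lemma wprod_nonneg w u : (forall i, 0 <= w i) -> 0 <= wprod w u.
Proof. intros H; induction u; simpl; [lra|]. apply Rmult_le_pos; auto. Qed.

Lemma wprod_Rpower w s u : (forall i, 0 < w i) ->
  wprod (fun i => Rpower (w i) s) u = Rpower (wprod w u) s.
Proof.
  intros Hw. induction u as [|i u IH]; simpl; [symmetry; apply Rpower_1_base|].
  rewrite IH. apply Rpower_mult_distr; auto using wprod_pos.
Qed.

Lemma wprod_le_pow w r u :
  (forall i, 0 <= w i) -> (forall i, In i u -> w i <= r) -> wprod w u <= r ^ length u.
Proof.
  intros Hw. induction u as [|i u IH]; intros Hu; simpl; [lra|].
  apply Rmult_le_compat; auto using wprod_nonneg.
  - apply Hu; simpl; auto.
  - apply IH. intros; apply Hu; simpl; auto.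
Qed.

Fixpoint prefix (al : nat -> nat) (m : nat) : list nat :=
  match m with O => [] | S m' => prefix al m' ++ [al m'] end.

Lemma prefix_length al m : length (prefix al m) = m.
Proof. induction m; simpl; auto. rewrite length_app, IHm; simpl; lia. Qed.

Lemma firstn_prefix al m j : (j <= m)%nat -> firstn j (prefix al m) = prefix al j.
Proof.
  induction m as [|m IH]; intros Hj.
  - replace j with 0%nat by lia. reflexivity.
  - destruct (Nat.eq_dec j (S m)) as [->|Hne].
    + apply firstn_all2. rewrite prefix_length; lia.
    + simpl. rewrite firstn_app, prefix_length.
      replace (j - m)%nat with 0%nat by lia. rewrite app_nil_r. apply IH; lia.
Qed.

Lemma prefix_S al m : prefix al (S m) = al 0%nat :: prefix (fun k => al (S k)) m.
Proof. induction m as [|m IH]; simpl; auto. simpl in IH. rewrite IH. reflexivity. Qed.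

Lemma In_prefix al m i : In i (prefix al m) -> exists k, (k < m)%nat /\ i = al k.
Proof.
  induction m as [|m IH]; simpl; [tauto|]. intros H. apply in_app_or in H as [H|[H|[]]].
  - destruct (IH H) as (k & Hk & ->). exists k; split; auto; lia.
  - exists m; split; auto.
Qed.

Definition is_prefix (p v : list nat) : Prop := exists r, v = p ++ r.

Lemma is_prefix_firstn p v k : is_prefix p v -> (length p <= k)%nat -> is_prefix p (firstn k v).
Proof.
  intros [r ->] Hk. rewrite firstn_app, firstn_all2 by lia. exists (firstn (k - length p) r). auto.
Qed.

Lemma firstn_is_prefix v k : is_prefix (firstn k v) v.
Proof. exists (skipn k v). symmetry; apply firstn_skipn. Qed.

Lemma is_prefix_trans u v w : is_prefix u v -> is_prefix v w -> is_prefix u w.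
Proof. intros [r ->] [r' ->]. exists (r ++ r'). symmetry; apply app_assoc. Qed.

Lemma not_prefix_split u w : ~ is_prefix u w -> ~ is_prefix w u ->
  exists c i j u' w', i <> j /\ u = c ++ i :: u' /\ w = c ++ j :: w'.
Proof.
  revert w; induction u as [|i u IH]; intros w H1 H2.
  - exfalso; apply H1. exists w; reflexivity.
  - destruct w as [|j w].
    + exfalso; apply H2. exists (i :: u); reflexivity.
    + destruct (Nat.eq_dec i j) as [<-|Hne].
      * destruct (IH w) as (c & i' & j' & u' & w' & Hn & -> & ->).
        { intros (r & Hr). apply H1. exists r. simpl; rewrite Hr; reflexivity. }
        { intros (r & Hr). apply H2. exists r. simpl; rewrite Hr; reflexivity. }
        exists (i :: c), i', j', u', w'. auto.
      * exists [], i, j, u, w. auto.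
Qed.

Lemma disjoint_open_intervals (x1 l1 x2 l2 : R) : 0 < l1 -> 0 < l2 ->
  (forall y, ~ (x1 < y < x1 + l1 /\ x2 < y < x2 + l2)) ->
  x2 + l2 <= x1 \/ x1 + l1 <= x2.
Proof.
  intros H1 H2 H. destruct (Rle_dec (x2 + l2) x1); [left; auto|].
  destruct (Rle_dec (x1 + l1) x2); [right; auto|]. exfalso.
  destruct (Rle_dec x1 x2), (Rle_dec (x1 + l1) (x2 + l2)).
  - apply (H ((x2 + x1 + l1) / 2)). lra.
  - apply (H ((x2 + x2 + l2) / 2)). lra.
  - apply (H ((x1 + x1 + l1) / 2)). lra.
  - apply (H ((x1 + x2 + l2) / 2)). lra.
Qed.

(* Induction on the number of intervals: the first one splits [[A, B]] into the parts to its left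
   and to its right, each containing the intervals on its side. *)
Lemma lsum_le_of_disjoint_intervals {T} (x len : T -> R) (l : list T) (A B : R) :
  A <= B -> NoDup l ->
  (forall t, In t l -> 0 < len t /\ A <= x t /\ x t + len t <= B) ->
  (forall t t', In t l -> In t' l -> t <> t' -> forall y,
      ~ (x t < y < x t + len t /\ x t' < y < x t' + len t')) ->
  lsum len l <= B - A.
Proof.
  remember (length l) as n eqn:Hn. assert (Hl : (length l <= n)%nat) by lia. clear Hn.
  revert l A B Hl. induction n as [|n IH]; intros l A B Hl HAB Hnd Hin Hdisj.
  - destruct l; simpl in Hl; [simpl; lra | lia].
  - destruct l as [|t l']; [simpl; lra|].
    simpl in Hl. inversion Hnd as [|? ? Hnot Hnd']; subst.
    destruct (Hin t (or_introl eq_refl)) as (Ht1 & Ht2 & Ht3).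
    set (left := fun t' => if Rle_dec (x t' + len t') (x t) then true else false).
    rewrite lsum_cons, (lsum_filter len left l').
    assert (Hleft : lsum len (filter left l') <= x t - A).
    { apply IH; auto using NoDup_filter.
      - pose proof (filter_length_le left l'). lia.
      - intros t' Ht'. apply filter_In in Ht' as [Ht' Hp]. unfold left in Hp.
        destruct (Rle_dec (x t' + len t') (x t)); [|discriminate].
        destruct (Hin t' (or_intror Ht')) as (? & ? & ?). lra.
      - intros t1 t2 H1 H2. apply filter_In in H1, H2. apply Hdisj; simpl; tauto. }
    assert (Hright : lsum len (filter (fun t' => negb (left t')) l') <= B - (x t + len t)).
    { apply IH; auto using NoDup_filter.
      - pose proof (filter_length_le (fun t' => negb (left t')) l'). lia.
      - intros t' Ht'. apply filter_In in Ht' as [Ht' Hp]. unfold left in Hp.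
        destruct (Rle_dec (x t' + len t') (x t)); [discriminate|].
        destruct (Hin t' (or_intror Ht')) as (Q0 & Q1 & Q2).
        assert (Hne : t' <> t) by (intros ->; contradiction).
        destruct (disjoint_open_intervals (x t) (len t) (x t') (len t') Ht1 Q0) as [Hc|Hc].
        + intros y; apply Hdisj; simpl; auto.
        + contradiction.
        + lra.
      - intros t1 t2 H1 H2. apply filter_In in H1, H2. apply Hdisj; simpl; tauto. }
    lra.
Qed.

Fixpoint words (F : list nat) (M : nat) : list (list nat) :=
  match M with
  | O => [[]]
  | S M' => flat_map (fun i => map (cons i) (words F M')) F
  end.

Lemma In_words F M v : In v (words F M) <-> length v = M /\ forall i, In i v -> In i F.
Proof.
  revert v; induction M as [|M IH]; intros v; simpl.
  - split.
    + intros [<-|[]]. simpl; tauto.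
    + intros [H _]. destruct v; simpl in H; [auto|discriminate].
  - rewrite in_flat_map. split.
    + intros (i & Hi & Hv). apply in_map_iff in Hv as (v' & <- & Hv').
      apply IH in Hv' as [H1 H2]. simpl. split; [lia|]. intros j [<-|Hj]; auto.
    + intros [H1 H2]. destruct v as [|i v']; simpl in H1; [discriminate|].
      exists i. split; [apply H2; simpl; auto|]. apply in_map, IH.
      split; [lia|]. intros j Hj; apply H2; simpl; auto.
Qed.

Lemma finite_words_list (F : list nat) (N : nat) (P : list nat -> Prop) :
  exists L, NoDup L /\ forall u, In u L <->
    ((length u <= N)%nat /\ (forall i, In i u -> In i F)) /\ P u.
Proof.
  set (all := flat_map (words F) (seq 0 (S N))).
  exists (nodup (list_eq_dec Nat.eq_dec)
       (filter (fun u => if excluded_middle_informative (P u) then true else false) all)).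
  split; [apply NoDup_nodup|]. intros u.
  rewrite nodup_In, filter_In. unfold all. rewrite in_flat_map.
  destruct (excluded_middle_informative (P u)) as [Hu|Hu]; split.
  - intros [(M & HM & Hw) _]. apply in_seq in HM. apply In_words in Hw as [<- Hw]. split; auto. split; auto. lia.
  - intros [[Hl Hw] _]. split; auto. exists (length u). split; [apply in_seq; lia|]. apply In_words; auto.
  - intros [_ H]. discriminate.
  - intros [_ H]. contradiction.
Qed.


Definition residual (i : nat) (L : list (list nat)) : list (list nat) :=
  flat_map (fun u => match u with j :: u' => if Nat.eqb j i then [u'] else [] | [] => [] end) L.

Lemma lsum_indicator (F : list nat) j (g : R) (w : nat -> R) : NoDup F -> 0 <= g -> 0 <= w j ->
  lsum (fun i => w i * (if Nat.eqb j i then g else 0)) F <= w j * g.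
Proof.
  intros Hnd Hg Hw. induction Hnd as [|i F Hi Hnd IH]; [simpl; nra|].
  rewrite lsum_cons. destruct (Nat.eqb_spec j i) as [<-|Hne].
  - rewrite lsum_zero; [lra|]. intros k Hk.
    destruct (Nat.eqb_spec j k); [subst; contradiction|lra].
  - lra.
Qed.

Lemma lsum_residual_le (F : list nat) (w : nat -> R) L : NoDup F -> (forall i, 0 <= w i) ->
  lsum (fun i => w i * lsum (wprod w) (residual i L)) F <= lsum (wprod w) L.
Proof.
  intros Hnd Hw. induction L as [|u L IH].
  - rewrite lsum_zero; [simpl; lra|]. intros i _. simpl. lra.
  - set (head := fun i => match u with j :: u' => if Nat.eqb j i then wprod w u' else 0 | [] => 0 end).
    assert (E : forall i, lsum (wprod w) (residual i (u :: L)) = head i + lsum (wprod w) (residual i L)).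
    { intros i. unfold residual. simpl. rewrite lsum_app. unfold head.
      destruct u as [|j u']; [reflexivity|]. destruct (Nat.eqb j i); simpl; lra. }
    assert (Hhead : lsum (fun i => w i * head i) F <= wprod w u).
    { unfold head. destruct u as [|j u'].
      - rewrite lsum_zero; [simpl; lra|]. intros; lra.
      - apply lsum_indicator; auto using wprod_nonneg. }
    apply Rle_trans with (lsum (fun i => w i * head i) F + lsum (fun i => w i * lsum (wprod w) (residual i L)) F).
    + rewrite <- lsum_plus. apply lsum_le. intros i _. rewrite E. lra.
    + rewrite lsum_cons. lra.
Qed.

(* Induction on [M]: strip the first letter and use [lsum_residual_le]. *)
Lemma prefix_cover_weight_ge_1 (F : list nat) (w : nat -> R) :
  NoDup F -> (forall i, 0 <= w i) -> 1 <= lsum w F ->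
  forall M L, (forall v, In v (words F M) -> exists u, In u L /\ is_prefix u v) ->
  1 <= lsum (wprod w) L.
Proof.
  intros Hnd Hw HF M. induction M as [|M IH]; intros L HL.
  - destruct (HL [] (or_introl eq_refl)) as (u & Hu & r & Hr).
    destruct u; [|discriminate]. apply (term_le_lsum (wprod w) L []); auto using wprod_nonneg.
  - destruct (classic (In [] L)) as [Hn|Hn].
    { apply (term_le_lsum (wprod w) L []); auto using wprod_nonneg. }
    assert (Hres : forall i, In i F -> 1 <= lsum (wprod w) (residual i L)).
    { intros i Hi. apply IH. intros v Hv.
      assert (Hv' : In (i :: v) (words F (S M))).
      { apply In_words in Hv as [H1 H2]. apply In_words. simpl. split; [lia|]. intros j [<-|Hj]; auto. }
      destruct (HL _ Hv') as (u & Hu & r & Hr).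
      destruct u as [|j u']; [contradiction|]. injection Hr as <- Hr.
      exists u'. split; [|exists r; auto]. apply in_flat_map. exists (i :: u').
      split; auto. rewrite Nat.eqb_refl. simpl; auto. }
    eapply Rle_trans; [|apply (lsum_residual_le F w L Hnd Hw)].
    eapply Rle_trans; [apply HF|]. apply lsum_le. intros i Hi.
    specialize (Hres i Hi). specialize (Hw i). nra.
Qed.

Lemma eventually_forall_in (F : list nat) (P : nat -> nat -> Prop) :
  (forall i, In i F -> exists Ni, forall N, (Ni <= N)%nat -> P i N) ->
  exists N0, forall i, In i F -> forall N, (N0 <= N)%nat -> P i N.
Proof.
  induction F as [|i F IH]; intros H.
  - exists 0%nat. intros i [].
  - destruct IH as [N1 H1]; [intros j Hj; apply H; simpl; auto|].
    destruct (H i (or_introl eq_refl)) as [N2 H2].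
    exists (Nat.max N1 N2). intros j [<-|Hj] N HN.
    + apply H2; lia.
    + apply H1; auto; lia.
Qed.

Lemma exists_path_of_extendable (F : list nat) (P : list nat -> Prop) :
  P [] -> (forall w, P w -> exists i, In i F /\ P (w ++ [i])) ->
  exists al, (forall k, In (al k) F) /\ forall m, P (prefix al m).
Proof.
  intros H0 Hext.
  destruct (functional_choice (fun w i => P w -> In i F /\ P (w ++ [i]))) as [next Hnext].
  { intros w. destruct (classic (P w)) as [Hw|Hw].
    - destruct (Hext w Hw) as [i Hi]. exists i; auto.
    - exists 0%nat. intros; contradiction. }
  set (W := fix W (m : nat) : list nat := match m with O => [] | S m' => W m' ++ [next (W m')] end).
  assert (HW : forall m, P (W m) /\ prefix (fun k => next (W k)) m = W m).
  { induction m as [|m [IH1 IH2]]; simpl; [auto|].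
    split; [apply Hnext; auto|]. rewrite IH2. reflexivity. }
  exists (fun k => next (W k)). split.
  - intros k. apply Hnext, HW.
  - intros m. destruct (HW m) as [H1 H2]. rewrite H2. exact H1.
Qed.

Section Konig.

Variable F : list nat.
Variable Ls : nat -> list (list nat).

Let covered (N : nat) (v : list nat) : Prop :=
  exists n, (n < N)%nat /\ exists u, In u (Ls n) /\ is_prefix u v.

Let uncovered_beyond (w : list nat) : Prop :=
  forall N, (length w <= N)%nat -> exists v, In v (words F N) /\ is_prefix w v /\ ~ covered N v.

Lemma covered_mono N N' v v' : (N <= N')%nat -> is_prefix v v' -> covered N v -> covered N' v'.
Proof.
  intros HN Hv (n & Hn & u & Hu & Huv). exists n. split; [lia|].
  exists u. split; auto. eapply is_prefix_trans; eauto.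
Qed.

Lemma uncovered_beyond_extend w :
  uncovered_beyond w -> exists i, In i F /\ uncovered_beyond (w ++ [i]).
Proof.
  intros Hw. apply NNPP. intros Hno.
  assert (Hall : forall i, In i F -> exists Ni, forall N, (Ni <= N)%nat ->
             forall v, In v (words F N) -> is_prefix (w ++ [i]) v -> covered N v).
  { intros i Hi. assert (Hnb : ~ uncovered_beyond (w ++ [i])) by (intros Hb; apply Hno; eauto).
    apply not_all_ex_not in Hnb as [Ni Hni]. apply imply_to_and in Hni as [Hlen Hni].
    exists Ni. intros N HN v Hv Hp.
    assert (Hv' : In (firstn Ni v) (words F Ni)).
    { apply In_words in Hv as [H1 H2]. apply In_words. rewrite length_firstn.
      split; [lia|]. intros j Hj. apply H2. rewrite <- (firstn_skipn Ni v). apply in_or_app; auto. }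
    apply (covered_mono Ni N (firstn Ni v) v HN (firstn_is_prefix v Ni)).
    apply NNPP. intros Hc. apply Hni. exists (firstn Ni v). auto using is_prefix_firstn. }
  destruct (eventually_forall_in F _ Hall) as [N0 HN0].
  destruct (Hw (Nat.max N0 (S (length w))) ltac:(lia)) as (v & Hv & [r ->] & Hnc).
  apply Hnc. apply In_words in Hv as [Hl Hin]. rewrite length_app in Hl.
  destruct r as [|i r]; [simpl in Hl; lia|].
  apply (HN0 i); [apply Hin, in_or_app; simpl; auto | lia | apply In_words; rewrite length_app; auto |].
  exists r. rewrite <- app_assoc. reflexivity.
Qed.

Lemma konig :
  (forall al : nat -> nat, (forall k, In (al k) F) -> exists n m, In (prefix al m) (Ls n)) ->
  exists N, forall v, In v (words F N) -> exists n, (n < N)%nat /\ exists u, In u (Ls n) /\ is_prefix u v.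
Proof.
  intros Hcov. apply NNPP. intros Hno.
  assert (H0 : uncovered_beyond []).
  { intros N _. apply NNPP. intros Hc. apply Hno. exists N. intros v Hv. apply NNPP. intros Hg.
    apply Hc. exists v. repeat split; auto. exists v; auto. }
  destruct (exists_path_of_extendable F uncovered_beyond H0 uncovered_beyond_extend) as (al & HalF & Hal).
  destruct (Hcov al HalF) as (n & m & Hin).
  set (N := Nat.max (S n) m).
  destruct (Hal N N) as (v & Hv & [r ->] & Hnc); [rewrite prefix_length; lia|].
  apply Hnc. exists n. split; [lia|]. exists (prefix al m). split; auto.
  rewrite <- (firstn_prefix al N m) by lia. apply is_prefix_trans with (prefix al N).
  - apply firstn_is_prefix.
  - exists r. reflexivity.
Qed.

End Konig.

Lemma prefix_cover_psum_ge_1 (F : list nat) (w : nat -> R) (Ls : nat -> list (list nat)) :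
  NoDup F -> (forall i, 0 <= w i) -> 1 <= lsum w F ->
  (forall al : nat -> nat, (forall k, In (al k) F) -> exists n m, In (prefix al m) (Ls n)) ->
  exists N, 1 <= psum (fun n => lsum (wprod w) (Ls n)) N.
Proof.
  intros Hnd Hw HF Hcov. destruct (konig F Ls Hcov) as [N HN]. exists N.
  rewrite <- lsum_concat. apply (prefix_cover_weight_ge_1 F w Hnd Hw HF N).
  intros v Hv. destruct (HN v Hv) as (n & Hn & u & Hu & Hp). exists u. split; auto.
  apply in_concat. exists (Ls n). split; auto. apply in_map, in_seq. lia.
Qed.

(** * Cylinders of the GLS-expansion *)

Lemma GLS_set_mono q a (W1 W2 : nat -> Prop) x :
  (forall i, W1 i -> W2 i) -> GLS_set q a W1 x -> GLS_set q a W2 x.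
Proof. intros H (al & H1 & H2). exists al. split; auto. Qed.

Section Cylinders.

Variables q a : nat -> R.
Hypothesis hq_pos : forall i, 0 < q i.
Hypothesis ha_sub : forall i, 0 <= a i /\ a i + q i <= 1.
Hypothesis ha_disj : forall i j, i <> j -> forall x,
  ~ ((a i < x < a i + q i) /\ (a j < x < a j + q j)).

Fixpoint f_word (w : list nat) (x : R) : R :=
  match w with [] => x | i :: w' => gls_f q a i (f_word w' x) end.

Definition in_cyl (w : list nat) (x : R) : Prop := f_word w 0 <= x <= f_word w 0 + wprod q w.

Lemma f_word_affine w x : f_word w x = f_word w 0 + wprod q w * x.
Proof. induction w as [|i w IH]; simpl; [lra|]. unfold gls_f. rewrite IH. ring. Qed.

Lemma f_word_app w1 w2 x : f_word (w1 ++ w2) x = f_word w1 (f_word w2 x).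
Proof. induction w1 as [|i w IH]; simpl; auto. rewrite IH; auto. Qed.

Lemma gls_comp_prefix al m x : gls_comp q a al m x = f_word (prefix al m) x.
Proof.
  revert x; induction m as [|m IH]; intros x; simpl; auto.
  rewrite IH, f_word_app. reflexivity.
Qed.

Lemma gls_cyl_iff al n x : gls_cyl q a al n x <-> in_cyl (prefix al n) x.
Proof.
  unfold gls_cyl, in_cyl. setoid_rewrite gls_comp_prefix.
  set (w := prefix al n). pose proof (wprod_pos q w hq_pos) as Hp.
  split.
  - intros (t & Ht & ->). rewrite (f_word_affine w t). nra.
  - intros Hx. exists ((x - f_word w 0) / wprod q w).
    rewrite (f_word_affine w ((x - f_word w 0) / wprod q w)). split.
    + split; [apply Rdiv_le_0_compat; lra|].
      apply Rmult_le_reg_r with (wprod q w); auto.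
      unfold Rdiv. rewrite Rmult_assoc, Rinv_l by lra. lra.
    + field. lra.
Qed.

Lemma cyl_in_unit w : 0 <= f_word w 0 /\ f_word w 0 + wprod q w <= 1.
Proof.
  induction w as [|i w IH]; simpl; [lra|]. unfold gls_f.
  destruct (ha_sub i). specialize (hq_pos i). split; nra.
Qed.

Lemma in_cyl_snoc w i x : in_cyl (w ++ [i]) x -> in_cyl w x.
Proof.
  unfold in_cyl. rewrite f_word_app, wprod_app. simpl.
  rewrite (f_word_affine w (gls_f q a i 0)). unfold gls_f.
  pose proof (wprod_pos q w hq_pos). destruct (ha_sub i). specialize (hq_pos i). nra.
Qed.

Lemma in_cyl_prefix_mono al m m' x : (m <= m')%nat -> in_cyl (prefix al m') x -> in_cyl (prefix al m) x.
Proof. intros Hle. induction Hle; auto. intros H. apply IHHle, (in_cyl_snoc _ (al m0)), H. Qed.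

Lemma exists_point_in_cylinders al : exists x, forall m, in_cyl (prefix al m) x.
Proof.
  set (left := fun m => f_word (prefix al m) 0).
  assert (Hleft : forall m, in_cyl (prefix al m) (left m)).
  { intros m. unfold in_cyl, left. pose proof (wprod_pos q (prefix al m) hq_pos). lra. }
  set (Lefts := fun y => exists m, y = left m).
  assert (Hb : bound Lefts).
  { exists 1. intros y [m ->]. pose proof (cyl_in_unit (prefix al m)).
    pose proof (wprod_pos q (prefix al m) hq_pos). unfold left; lra. }
  destruct (completeness Lefts Hb (ex_intro _ (left 0%nat) (ex_intro _ 0%nat eq_refl))) as [x [Hub Hlub]].
  exists x. intros m. split.
  - apply Hub. exists m; auto.
  - apply Hlub. intros y [m' ->].
    destruct (Nat.le_ge_cases m m') as [Hle|Hle].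
    + exact (proj2 (in_cyl_prefix_mono al m m' _ Hle (Hleft m'))).
    + pose proof (proj1 (in_cyl_prefix_mono al m' m _ Hle (Hleft m))).
      pose proof (wprod_pos q (prefix al m) hq_pos). unfold left in *. lra.
Qed.

Lemma cyl_interior_inv c i u y :
  f_word (c ++ i :: u) 0 < y < f_word (c ++ i :: u) 0 + wprod q (c ++ i :: u) ->
  exists z, a i < z < a i + q i /\ y = f_word c z.
Proof.
  rewrite f_word_app, wprod_app. simpl. unfold gls_f.
  rewrite (f_word_affine c). pose proof (wprod_pos q c hq_pos) as Hc.
  destruct (cyl_in_unit u) as [L1 L2]. pose proof (wprod_pos q u hq_pos).
  set (L := f_word u 0) in *. set (C0 := f_word c 0). set (Q := wprod q c) in *.
  intros [Y1 Y2]. exists ((y - C0) / Q).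
  split; [|rewrite (f_word_affine c); fold C0 Q; field; lra].
  set (z := (y - C0) / Q). assert (E : y = C0 + Q * z) by (unfold z; field; lra).
  specialize (hq_pos i).
  assert (Z1 : Q * (a i + q i * L) < Q * z) by lra.
  assert (Z2 : Q * z < Q * (a i + q i * L + q i * (q i * 0 + wprod q u))) by nra.
  apply Rmult_lt_reg_l in Z1, Z2; auto. nra.
Qed.

Lemma cyl_interiors_disjoint u w y : ~ is_prefix u w -> ~ is_prefix w u ->
  ~ ((f_word u 0 < y < f_word u 0 + wprod q u) /\ (f_word w 0 < y < f_word w 0 + wprod q w)).
Proof.
  intros H1 H2 [Y1 Y2].
  destruct (not_prefix_split u w H1 H2) as (c & i & j & u' & w' & Hn & -> & ->).
  destruct (cyl_interior_inv c i u' y Y1) as (z1 & Z1 & E1).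
  destruct (cyl_interior_inv c j w' y Y2) as (z2 & Z2 & E2).
  rewrite (f_word_affine c) in E1, E2. pose proof (wprod_pos q c hq_pos).
  assert (z1 = z2) by (apply Rmult_eq_reg_l with (wprod q c); lra).
  subst. apply (ha_disj i j Hn z2). auto.
Qed.

End Cylinders.

(** * Lower bound: mass distribution on stopping-time cylinders *)

Lemma pow_le_of_lt_1 r d : 0 <= r < 1 -> 0 < d -> exists N, r ^ N <= d.
Proof.
  intros Hr Hd. destruct (pow_lt_1_zero r ltac:(rewrite Rabs_right; lra) d Hd) as [N HN].
  exists N. specialize (HN N (le_n N)). rewrite Rabs_right in HN by (apply Rle_ge, pow_le; lra). lra.
Qed.

Lemma exists_least (P : nat -> Prop) : (exists n, P n) -> exists n, P n /\ forall k, (k < n)%nat -> ~ P k.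
Proof.
  intros Hex. destruct (dec_inh_nat_subset_has_unique_least_element P (fun n => classic (P n)) Hex)
    as [n [[Hn Hmin] _]].
  exists n. split; auto. intros k Hk Pk. specialize (Hmin k Pk). lia.
Qed.

Lemma list_lower_bound (w : nat -> R) (F : list nat) :
  (forall i, 0 < w i) -> exists m, 0 < m /\ forall i, In i F -> m <= w i.
Proof.
  intros Hw. induction F as [|i F [m [Hm HF]]]; [exists 1; split; [lra|intros i []]|].
  exists (Rmin (w i) m). split; [apply Rmin_glb_lt; auto|].
  intros j [<-|Hj]; [apply Rmin_l|]. eapply Rle_trans; [apply Rmin_r|]. auto.
Qed.

Lemma list_upper_bound_lt_1 (w : nat -> R) (F : list nat) :
  (forall i, w i < 1) -> exists r, 0 <= r < 1 /\ forall i, In i F -> w i <= r.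
Proof.
  intros Hw. induction F as [|i F [r [Hr HF]]]; [exists 0; split; [lra|intros i []]|].
  exists (Rmax (w i) r). split; [split; [apply Rle_trans with r; [lra|apply Rmax_r]|apply Rmax_lub_lt; auto; lra]|].
  intros j [<-|Hj]; [apply Rmax_l|]. eapply Rle_trans; [|apply Rmax_r]. auto.
Qed.

Section StoppingWords.

Variable q : nat -> R.
Hypothesis hq_pos : forall i, 0 < q i.

Definition stopping_word (d : R) (u : list nat) : Prop :=
  wprod q u <= d /\ forall j, (j < length u)%nat -> d < wprod q (firstn j u).

Lemma stopping_word_not_prefix d u w :
  stopping_word d u -> stopping_word d w -> u <> w -> ~ is_prefix u w.
Proof.
  intros [H1 _] [_ H4] Hne [[|x r] ->].
  - apply Hne. rewrite app_nil_r; reflexivity.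
  - specialize (H4 (length u)). rewrite firstn_app, firstn_all, Nat.sub_diag, app_nil_r, length_app in H4.
    simpl in H4. specialize (H4 ltac:(lia)). lra.
Qed.

Lemma stopping_word_ge rmin d u : 0 < rmin -> 0 <= d < 1 ->
  (forall i, In i u -> rmin <= q i) -> stopping_word d u -> rmin * d <= wprod q u.
Proof.
  intros Hr Hd Hu [S1 S2].
  destruct (list_eq_dec Nat.eq_dec u []) as [->|Hne]; [simpl in S1; lra|].
  destruct (exists_last Hne) as (u' & i & ->).
  specialize (S2 (length u')). rewrite firstn_app, firstn_all, Nat.sub_diag, app_nil_r, length_app in S2.
  simpl in S2. specialize (S2 ltac:(lia)).
  rewrite wprod_app. simpl. rewrite Rmult_1_r.
  assert (rmin <= q i) by (apply Hu, in_or_app; simpl; auto).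
  assert (0 < wprod q u') by (apply wprod_pos; auto). nra.
Qed.

Lemma stopping_word_length r d N u : (forall i, In i u -> q i <= r) -> r ^ N <= d ->
  stopping_word d u -> (length u <= N)%nat.
Proof.
  intros Hu HN [_ S2]. apply Nat.nlt_ge. intros Hlt. specialize (S2 N Hlt).
  assert (wprod q (firstn N u) <= r ^ N).
  { replace N with (length (firstn N u)) at 2 by (rewrite length_firstn; lia).
    apply wprod_le_pow; [intros; left; auto|].
    intros i Hi. apply Hu. rewrite <- (firstn_skipn N u). apply in_or_app; auto. }
  lra.
Qed.

Lemma stopping_prefix_exists al r d : (forall k, q (al k) <= r) -> r < 1 -> 0 < d ->
  exists m, stopping_word d (prefix al m).
Proof.
  intros Hal Hr Hd.
  assert (Hr0 : 0 <= r) by (pose proof (hq_pos (al 0%nat)); pose proof (Hal 0%nat); lra).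
  destruct (pow_le_of_lt_1 r d (conj Hr0 Hr) Hd) as [N HN].
  destruct (exists_least (fun m => wprod q (prefix al m) <= d)) as (m & Hm & Hmin).
  { exists N. eapply Rle_trans; [|apply HN]. rewrite <- (prefix_length al N) at 2.
    apply wprod_le_pow; [intros; left; auto|]. intros i Hi. apply In_prefix in Hi as (k & _ & ->). auto. }
  exists m. split; auto. intros j Hj. rewrite prefix_length in Hj. rewrite firstn_prefix by lia.
  apply Rnot_le_lt. apply Hmin; auto.
Qed.

Lemma stopping_words_list (F : list nat) r d (P : list nat -> Prop) :
  0 <= r < 1 -> (forall i, In i F -> q i <= r) -> 0 < d ->
  exists L, NoDup L /\
    forall u, In u L <-> (stopping_word d u /\ (forall i, In i u -> In i F)) /\ P u.
Proof.
  intros Hr HF Hd. destruct (pow_le_of_lt_1 r d Hr Hd) as [N HN].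
  destruct (finite_words_list F N (fun u => stopping_word d u /\ P u)) as (L & Hnd & HL).
  exists L. split; auto. intros u. rewrite HL. split; [tauto|].
  intros [[Hst HuF] HP]. split; [split|]; auto.
  apply (stopping_word_length r d N u); auto.
Qed.

End StoppingWords.

Lemma Rpower_le_mul x m s : 0 < m <= x -> s <= 1 -> Rpower x s <= x * Rpower m (s - 1).
Proof.
  intros Hm Hs. rewrite Rpower_split by lra. apply Rmult_le_compat_l; [lra|].
  apply Rpower_antitone_base; lra.
Qed.

Lemma small_set_radius s (U : R -> Prop) c : 0 < s -> 0 < c < 1 -> Rbar_le (diam U) (1/2) ->
  exists d, 0 < d < 1 /\ (forall y y', U y -> U y' -> Rabs (y - y') <= d) /\
            Rpower d s <= dterm s U + c.
Proof.
  intros Hs Hc HU.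
  set (t := Rmax 0 (real (diam U))).
  assert (Ht : 0 <= t <= 1/2).
  { unfold t. destruct (diam U); simpl in *; try contradiction; unfold Rmax;
      destruct (Rle_dec 0 _); lra. }
  set (ct := Rpower c (1 / s)).
  assert (Hct : 0 < ct < 1) by (split; [apply Rpower_pos|apply Rpower_lt_1; [lra|apply Rdiv_lt_0_compat; lra]]).
  assert (Ect : Rpower ct s = c).
  { unfold ct. rewrite Rpower_mult. replace (1 / s * s) with 1 by (field; lra). apply Rpower_1. lra. }
  exists (Rmax t ct). split; [|split].
  - split; [apply Rlt_le_trans with ct; [lra|apply Rmax_r]|apply Rmax_lub_lt; lra].
  - intros y y' Hy Hy'. destruct (diam_finite U y (1/2) Hy HU) as (t0 & Et0 & Ht0).
    pose proof (diam_ge U y y' Hy Hy') as G. rewrite Et0 in G.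
    apply Rle_trans with t; [|apply Rmax_l]. unfold t. rewrite Et0.
    apply Rle_trans with t0; [exact G|apply Rmax_r].
  - pose proof (dterm_nonneg s U). unfold Rmax at 1. destruct (Rle_dec t ct).
    + lra.
    + unfold dterm. fold t. rewrite powp_pos by lra. lra.
Qed.

Section LowerBound.

Variables q a : nat -> R.
Hypothesis hq_pos : forall i, 0 < q i.
Hypothesis hq_lt_1 : forall i, q i < 1.
Hypothesis ha_sub : forall i, 0 <= a i /\ a i + q i <= 1.
Hypothesis ha_disj : forall i j, i <> j -> forall x,
  ~ ((a i < x < a i + q i) /\ (a j < x < a j + q j)).

(* Each such cylinder has length at most [d] and meets [U], so all of them lie in an interval of
   length [4 d]; their interiors are disjoint since no stopping word is a prefix of another. *)
Lemma lsum_stopping_cylinders_le d (U : R -> Prop) (L : list (list nat)) :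
  0 < d -> (forall y y', U y -> U y' -> Rabs (y - y') <= d) -> NoDup L ->
  (forall u, In u L -> stopping_word q d u /\ exists y, U y /\ in_cyl q a u y) ->
  lsum (wprod q) L <= 4 * d.
Proof.
  intros Hd HU HL HLP.
  destruct L as [|u0 L0] eqn:EL; [simpl; lra|]. rewrite <- EL in *.
  destruct (HLP u0 ltac:(rewrite EL; simpl; auto)) as (_ & y0 & Hy0 & _).
  replace (4 * d) with ((y0 + 2 * d) - (y0 - 2 * d)) by ring.
  apply (lsum_le_of_disjoint_intervals (fun u => f_word q a u 0) (wprod q)); auto; try lra.
  - intros u Hu. destruct (HLP u Hu) as ([S1 _] & y & Hy & Hc).
    pose proof (HU y y0 Hy Hy0) as Hyy. unfold in_cyl in Hc. apply Rabs_le_between in Hyy.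
    pose proof (wprod_pos q u hq_pos). repeat split; lra.
  - intros u u' Hu Hu' Hne y.
    destruct (HLP u Hu) as (Hs1 & _). destruct (HLP u' Hu') as (Hs2 & _).
    apply cyl_interiors_disjoint; auto; apply (stopping_word_not_prefix q d); auto.
Qed.

Lemma lsum_stopping_cylinders_pow_le F s rmin d (U : R -> Prop) (L : list (list nat)) :
  0 < s <= 1 -> 0 < rmin -> (forall i, In i F -> rmin <= q i) -> 0 < d < 1 ->
  (forall y y', U y -> U y' -> Rabs (y - y') <= d) -> NoDup L ->
  (forall u, In u L -> (stopping_word q d u /\ (forall i, In i u -> In i F)) /\
                       exists y, U y /\ in_cyl q a u y) ->
  lsum (fun u => Rpower (wprod q u) s) L <= 4 * Rpower rmin (s - 1) * Rpower d s.
Proof.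
  intros Hs Hr HF Hd HU HL HLP.
  set (c := Rpower (rmin * d) (s - 1)).
  apply Rle_trans with (lsum (fun u => c * wprod q u) L).
  - apply lsum_le. intros u Hu. destruct (HLP u Hu) as ((Hst & HuF) & _).
    pose proof (stopping_word_ge q hq_pos rmin d u Hr ltac:(lra) (fun i Hi => HF i (HuF i Hi)) Hst).
    rewrite Rmult_comm. apply Rpower_le_mul; [split; nra|lra].
  - rewrite lsum_scal.
    replace (4 * Rpower rmin (s - 1) * Rpower d s) with (c * (4 * d)).
    + apply Rmult_le_compat_l; [left; apply Rpower_pos|].
      apply (lsum_stopping_cylinders_le d U L); auto; [lra|].
      intros u Hu. destruct (HLP u Hu) as ((Hst & _) & HP). auto.
    + unfold c. rewrite <- Rpower_mult_distr, (Rpower_split d s) by lra. ring.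
Qed.

Lemma stopping_cylinders_cover_paths F r (U : nat -> R -> Prop) (d : nat -> R)
  (Ls : nat -> list (list nat)) :
  (forall i, In i F -> q i <= r) -> r < 1 -> (forall n, 0 < d n) ->
  (forall x, GLS_set q a (fun i => In i F) x -> exists n, U n x) ->
  (forall n u, (stopping_word q (d n) u /\ (forall i, In i u -> In i F)) /\
               (exists y, U n y /\ in_cyl q a u y) -> In u (Ls n)) ->
  forall al, (forall k, In (al k) F) -> exists n m, In (prefix al m) (Ls n).
Proof.
  intros HFr Hr Hd HU HLs al Hal.
  destruct (exists_point_in_cylinders q a hq_pos ha_sub al) as [x Hx].
  destruct (HU x) as [n Hn].
  { exists al. split; auto. intros m. apply gls_cyl_iff; auto. }
  destruct (stopping_prefix_exists q hq_pos al r (d n)) as [m Hm]; auto.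
  exists n, m. apply HLs. split; [split; auto|eauto].
  intros i Hi. apply In_prefix in Hi as (k & _ & ->). auto.
Qed.

(* Mass distribution: if [C[GLS, F]] were covered by sets [U n] of small total [s]-mass, enlarge
   their diameters to scales [d n > 0] at an extra cost [eta / 2 ^ (n + 1)]. The stopping words at
   scale [d n] meeting [U n] then cover all paths, so by [prefix_cover_psum_ge_1] finitely many of
   them carry total [s]-mass at least 1, while those of [U n] carry only [O (d n ^ s)]. *)
Lemma not_hnull_of_lsum_ge_1 F s : NoDup F -> 0 < s <= 1 ->
  1 <= lsum (fun i => Rpower (q i) s) F -> ~ hnull s (GLS_set q a (fun i => In i F)).
Proof.
  intros HF Hs Hsum Hnull.
  destruct (list_lower_bound q F hq_pos) as (rmin & Hr & HrF).
  destruct (list_upper_bound_lt_1 q F hq_lt_1) as (r & Hr1 & HrF').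
  set (K := 4 * Rpower rmin (s - 1)).
  assert (HK : 0 < K) by (unfold K; pose proof (Rpower_pos rmin (s - 1)); lra).
  set (eta := Rmin (1/2) (/ (4 * K))).
  assert (Heta : 0 < eta <= 1/2 /\ K * eta <= 1/4).
  { unfold eta. split; [split; [apply Rmin_glb_lt; [lra|apply Rinv_0_lt_compat; lra]|apply Rmin_l]|].
    apply Rle_trans with (K * / (4 * K)); [apply Rmult_le_compat_l; [lra|apply Rmin_r]|].
    right. field. lra. }
  destruct (Hnull (1/2) ltac:(lra) eta ltac:(lra)) as (U & (HU1 & HU2 & HU3) & HU4).
  destruct (functional_choice (fun n d => 0 < d < 1 /\
              (forall y y', U n y -> U n y' -> Rabs (y - y') <= d) /\
              Rpower d s <= dterm s (U n) + eta * (/2) ^ S n)) as [d Hd].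
  { intros n. apply small_set_radius; auto; [lra|].
    assert (0 < (/2) ^ S n < 1) by (split; [apply pow_lt|apply pow_lt_1_compat]; lra || lia). nra. }
  destruct (functional_choice (fun n L => NoDup L /\ forall u, In u L <->
              (stopping_word q (d n) u /\ (forall i, In i u -> In i F)) /\
              exists y, U n y /\ in_cyl q a u y)) as [Ls HLs].
  { intros n. apply (stopping_words_list q hq_pos F r); auto. apply Hd. }
  destruct (prefix_cover_psum_ge_1 F (fun i => Rpower (q i) s) Ls HF
              (fun i => Rlt_le _ _ (Rpower_pos _ _)) Hsum) as [N HN].
  { apply (stopping_cylinders_cover_paths F r U d); auto; [lra|apply Hd|apply HLs]. }
  assert (Hb : forall n, lsum (wprod (fun i => Rpower (q i) s)) (Ls n) <=
                         K * (dterm s (U n) + eta * (/2) ^ S n)).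
  { intros n. destruct (Hd n) as (Hd1 & Hd2 & Hd3).
    apply Rle_trans with (K * Rpower (d n) s); [|apply Rmult_le_compat_l; lra].
    apply Rle_trans with (lsum (fun u => Rpower (wprod q u) s) (Ls n)).
    { apply lsum_le. intros u _. rewrite wprod_Rpower; auto; lra. }
    apply (lsum_stopping_cylinders_pow_le F s rmin (d n) (U n)); auto; apply HLs. }
  assert (Hdt : psum (fun n => dterm s (U n)) N <= eta)
    by (eapply Rle_trans; [apply psum_le_Series; auto using dterm_nonneg|exact HU4]).
  pose proof (psum_le _ _ N (fun n _ => Hb n)) as Hsum_le.
  rewrite psum_scal, psum_plus, psum_scal, psum_half_pow in Hsum_le.
  assert (0 < (/2) ^ N) by (apply pow_lt; lra).
  assert (K * (psum (fun n => dterm s (U n)) N + eta * (1 - (/2) ^ N)) <= K * (eta + eta))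
    by (apply Rmult_le_compat_l; nra).
  lra.
Qed.

End LowerBound.

(** * Upper bound: refining covers by self-similarity *)

Lemma series_tail_le u eps : (forall k, 0 <= u k) -> ex_series u -> 0 < eps ->
  exists N, forall M, psum (fun k => u (N + k)%nat) M <= eps.
Proof.
  intros Hu Hex Heps.
  destruct (proj2 (is_lim_seq_spec (sum_n u) (Series u)) (Series_correct u Hex) (mkposreal _ Heps))
    as [n0 Hn0].
  exists (S n0). intros M. specialize (Hn0 n0 (le_n _)). simpl in Hn0.
  rewrite sum_n_psum in Hn0. apply Rabs_def2 in Hn0.
  pose proof (psum_le_Series u (S n0 + M) Hu Hex) as Htot. rewrite psum_add in Htot. lra.
Qed.

Lemma div_mod_blocks b n j : (j < b)%nat -> ((n * b + j) / b = n /\ (n * b + j) mod b = j)%nat.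
Proof.
  intros Hj. assert (E1 : ((n * b + j) / b = n)%nat).
  { rewrite Nat.div_add_l, Nat.div_small by lia. lia. }
  split; auto. pose proof (Nat.div_mod_eq (n * b + j) b) as E2. rewrite E1 in E2. lia.
Qed.

Definition fimage (f : R -> R) (A : R -> Prop) : R -> Prop := fun y => exists x, A x /\ y = f x.

Section UpperBound.

Variables q a : nat -> R.
Hypothesis hq_pos : forall i, 0 < q i.
Hypothesis ha_sub : forall i, 0 <= a i /\ a i + q i <= 1.

Definition qpow (V : nat -> bool) (s : R) (i : nat) : R := if V i then Rpower (q i) s else 0.

Lemma qpow_nonneg V s i : 0 <= qpow V s i.
Proof. unfold qpow. destruct (V i); [left; apply Rpower_pos|lra]. Qed.

Lemma GLS_set_in_unit W x : GLS_set q a W x -> 0 <= x <= 1.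
Proof. intros (al & _ & Hc). destruct (Hc 0%nat) as (t & Ht & ->). exact Ht. Qed.

Lemma GLS_set_self_similar W x :
  GLS_set q a W x -> exists i y, W i /\ GLS_set q a W y /\ x = gls_f q a i y.
Proof.
  intros (al & HW & Hc).
  set (y := (x - a (al 0%nat)) / q (al 0%nat)).
  pose proof (hq_pos (al 0%nat)).
  exists (al 0%nat), y. split; [|split].
  - apply HW.
  - exists (fun k => al (S k)). split; auto. intros n.
    destruct (Hc (S n)) as (t' & Ht' & Ex'). exists t'. split; auto.
    rewrite gls_comp_prefix, prefix_S in Ex'. simpl in Ex'. unfold gls_f in Ex'.
    unfold y. rewrite gls_comp_prefix, Ex'. field. lra.
  - unfold y, gls_f. field. lra.
Qed.

Lemma gls_f_dist j x y : Rabs (gls_f q a j x - gls_f q a j y) = q j * Rabs (x - y).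
Proof.
  unfold gls_f. replace (a j + q j * x - (a j + q j * y)) with (q j * (x - y)) by ring.
  rewrite Rabs_mult, Rabs_right; [reflexivity|]. apply Rle_ge. left; apply hq_pos.
Qed.

Lemma diam_gls_f_image_le j (A : R -> Prop) (delta : R) :
  Rbar_le (diam A) delta -> Rbar_le (diam (fimage (gls_f q a j) A)) delta.
Proof.
  intros HA. apply diam_le. intros x y (x' & Hx' & ->) (y' & Hy' & ->). rewrite gls_f_dist.
  pose proof (diam_ge A x' y' Hx' Hy') as G.
  destruct (diam A) as [t| |]; simpl in G, HA; try contradiction.
  pose proof (Rabs_pos (x' - y')). pose proof (hq_pos j). destruct (ha_sub j). nra.
Qed.

Lemma dterm_gls_f_image j s (A : R -> Prop) (delta : R) : 0 < s ->
  Rbar_le (diam A) delta -> dterm s (fimage (gls_f q a j) A) <= Rpower (q j) s * dterm s A.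
Proof.
  intros Hs HA. pose proof (hq_pos j) as Hq.
  destruct (classic (exists x, A x)) as [[x0 Hx0]|Hn].
  - destruct (diam_finite A x0 delta Hx0 HA) as (t & Et & Ht).
    rewrite (dterm_finite s A t Et) by lra.
    apply Rle_trans with (powp (q j * t) s).
    + apply dterm_le; [lra|nra|]. intros x y (x' & Hx' & ->) (y' & Hy' & ->).
      rewrite gls_f_dist. apply Rmult_le_compat_l; [lra|].
      pose proof (diam_ge A x' y' Hx' Hy') as G. rewrite Et in G. exact G.
    + destruct (Req_dec t 0) as [->|Ht0].
      * rewrite Rmult_0_r. unfold powp. destruct (Rle_dec 0 0); lra.
      * rewrite !powp_pos by nra. rewrite Rpower_mult_distr by lra. lra.
  - rewrite dterm_empty by (intros y (x & Hx & _); eauto).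
    apply Rmult_le_pos; [left; apply Rpower_pos|apply dterm_nonneg].
Qed.

Lemma exists_cover W s delta : 0 < s -> 0 < delta -> exists U, is_cover s delta (GLS_set q a W) U.
Proof.
  intros Hs Hd. destruct (INR_archimed delta 1 Hd) as [N0 HN0].
  set (U := fun n x => (n <= N0)%nat /\ INR n * delta <= x <= INR (S n) * delta).
  assert (HUd : forall n x y, U n x -> U n y -> Rabs (x - y) <= delta).
  { intros n x y [_ Hx] [_ Hy]. rewrite S_INR in Hx, Hy. apply Rabs_le. lra. }
  assert (Hb : forall n, dterm s (U n) <= if Nat.leb n N0 then powp delta s else 0).
  { intros n. destruct (Nat.leb_spec n N0).
    - apply dterm_le; eauto; lra.
    - rewrite dterm_empty; [lra|]. intros x [Hx _]. lia. }
  assert (Hp : forall M, psum (fun n => dterm s (U n)) M <= INR (S N0) * powp delta s).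
  { intros M. eapply Rle_trans; [apply psum_le; intros; apply Hb|]. rewrite psum_first_terms_const.
    apply Rmult_le_compat_r; [apply powp_nonneg|]. apply le_INR. lia. }
  exists U. split; [|split].
  - intros n. apply diam_le, HUd.
  - intros x Hx. pose proof (GLS_set_in_unit W x Hx).
    destruct (exists_least (fun n => x < INR (S n) * delta)) as (n & Hn & Hmin).
    { exists N0. rewrite S_INR. lra. }
    exists n. split; [|split]; try lra.
    + destruct (Nat.le_gt_cases n N0) as [|Hgt]; auto. exfalso. apply (Hmin N0); auto. rewrite S_INR; lra.
    + destruct n as [|k]; [simpl; lra|]. apply Rnot_lt_le, Hmin. lia.
  - apply (ex_series_of_psum_le _ _ (fun n => dterm_nonneg s (U n)) Hp).
Qed.

Variable V : nat -> bool.

(* The sets of the refined cover are indexed by [m = n * (N + 1) + j]: for [j < N] the [m]-th set is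
   [f_j (U n)], for [j = N] it is the rank-1 cylinder [Delta_(N + n)] (empty sets when the digit is not in [V]). *)
Definition refined_cover (N : nat) (U : nat -> R -> Prop) (m : nat) : R -> Prop :=
  let n := (m / S N)%nat in
  let j := (m mod S N)%nat in
  if (j <? N)%nat then (if V j then fimage (gls_f q a j) (U n) else fun _ => False)
  else (if V (N + n)%nat then fun y => a (N + n)%nat <= y <= a (N + n)%nat + q (N + n)%nat
        else fun _ => False).

Lemma refined_cover_at N U n j : (j <= N)%nat ->
  refined_cover N U (n * S N + j) =
  if (j <? N)%nat then (if V j then fimage (gls_f q a j) (U n) else fun _ => False)
  else (if V (N + n)%nat then fun y => a (N + n)%nat <= y <= a (N + n)%nat + q (N + n)%nat
        else fun _ => False).
Proof.
  intros Hj. unfold refined_cover. destruct (div_mod_blocks (S N) n j ltac:(lia)) as [-> ->].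
  reflexivity.
Qed.

Let C_V := GLS_set q a (fun i => V i = true).

Lemma refined_cover_diam N U (delta : R) : (forall n, Rbar_le (diam (U n)) delta) ->
  (forall i, (N <= i)%nat -> V i = true -> q i <= delta) ->
  forall m, Rbar_le (diam (refined_cover N U m)) delta.
Proof.
  intros HU Hq m. unfold refined_cover.
  destruct (_ <? _)%nat; [destruct (V _)|destruct (V _) eqn:EV];
    try (apply diam_le; intros x y []; fail).
  - apply diam_gls_f_image_le, HU.
  - apply diam_le. intros x y Hx Hy. apply Rabs_le. specialize (Hq _ (Nat.le_add_r N _) EV). lra.
Qed.

Lemma refined_cover_covers N U : (forall x, C_V x -> exists n, U n x) ->
  forall x, C_V x -> exists m, refined_cover N U m x.
Proof.
  intros HU x Hx. destruct (GLS_set_self_similar _ x Hx) as (i & y & HVi & Hy & ->).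
  destruct (Nat.lt_ge_cases i N) as [Hi|Hi].
  - destruct (HU y Hy) as [n Hn]. exists (n * S N + i)%nat. rewrite refined_cover_at by lia.
    destruct (Nat.ltb_spec i N); [|lia]. rewrite HVi. exists y; auto.
  - exists ((i - N) * S N + N)%nat. rewrite refined_cover_at by lia.
    destruct (Nat.ltb_spec N N); [lia|]. replace (N + (i - N))%nat with i by lia. rewrite HVi.
    pose proof (GLS_set_in_unit _ y Hy). unfold gls_f. pose proof (hq_pos i). nra.
Qed.

Lemma refined_cover_dterm_le N U (delta : R) s n j : 0 < s -> (forall n, Rbar_le (diam (U n)) delta) ->
  (j <= N)%nat ->
  dterm s (refined_cover N U (n * S N + j)) <=
    if (j <? N)%nat then qpow V s j * dterm s (U n) else qpow V s (N + n).
Proof.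
  intros Hs HU Hj. rewrite refined_cover_at by exact Hj. unfold qpow.
  destruct (j <? N)%nat; destruct (V _); try (rewrite dterm_empty; [lra|intros x []]).
  - apply (dterm_gls_f_image j s (U n) delta Hs (HU n)).
  - rewrite <- powp_pos by auto. apply dterm_le; [lra|left; auto|].
    intros x y Hx Hy. apply Rabs_le. lra.
Qed.

Lemma refined_cover_psum_le N U (delta : R) s M : 0 < s -> (forall n, Rbar_le (diam (U n)) delta) ->
  psum (fun m => dterm s (refined_cover N U m)) (M * S N) <=
    psum (qpow V s) N * psum (fun n => dterm s (U n)) M + psum (fun n => qpow V s (N + n)%nat) M.
Proof.
  intros Hs HU. rewrite psum_blocks, <- psum_scal, <- psum_plus. apply psum_le. intros n _.
  cbn [psum]. apply Rplus_le_compat.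
  - rewrite Rmult_comm, <- psum_scal. apply psum_le. intros j Hj. rewrite Rmult_comm.
    pose proof (refined_cover_dterm_le N U delta s n j Hs HU ltac:(lia)) as H.
    destruct (Nat.ltb_spec j N); [exact H|lia].
  - pose proof (refined_cover_dterm_le N U delta s n N Hs HU (le_n N)) as H.
    destruct (Nat.ltb_spec N N); [lia|exact H].
Qed.

Lemma qpow_tail_le s delta eps : 0 < s -> 0 < delta -> 0 < eps -> ex_series (qpow V s) ->
  exists N, (forall i, (N <= i)%nat -> V i = true -> q i <= delta) /\
            forall M, psum (fun n => qpow V s (N + n)%nat) M <= eps.
Proof.
  intros Hs Hd He Hex.
  destruct (series_tail_le (qpow V s) (Rmin eps (Rpower delta s)) (qpow_nonneg V s) Hex)
    as [N HN]; [apply Rmin_glb_lt; auto using Rpower_pos|].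
  exists N. split.
  - intros i Hi HVi. apply Rnot_lt_le. intros Hlt.
    pose proof (term_le_psum (fun k => qpow V s (N + k)) (S (i - N)) (i - N)
                  (fun k => qpow_nonneg V s _) (Nat.lt_succ_diag_r _)) as Hterm.
    cbv beta in Hterm. replace (N + (i - N))%nat with i in Hterm by lia.
    pose proof (HN (S (i - N))). pose proof (Rmin_r eps (Rpower delta s)).
    pose proof (Rlt_Rpower_l delta (q i) s Hs (conj Hd Hlt)).
    unfold qpow at 1 in Hterm. rewrite HVi in Hterm. lra.
  - intros M. eapply Rle_trans; [apply HN|apply Rmin_l].
Qed.

Lemma refine_cover s delta U eps : 0 < s -> 0 < delta -> 0 < eps -> ex_series (qpow V s) ->
  is_cover s delta C_V U ->
  exists W, is_cover s delta C_V W /\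
    Series (fun m => dterm s (W m)) <= Series (qpow V s) * Series (fun n => dterm s (U n)) + eps.
Proof.
  intros Hs Hd He Hex (HU1 & HU2 & HU3).
  destruct (qpow_tail_le s delta eps Hs Hd He Hex) as (N & Hbig & Htail).
  assert (Hp : forall M, psum (fun m => dterm s (refined_cover N U m)) M <=
                         Series (qpow V s) * Series (fun n => dterm s (U n)) + eps).
  { intros M. eapply Rle_trans.
    { apply (psum_le_psum _ M (M * S N)); [intros; apply dterm_nonneg|nia]. }
    eapply Rle_trans; [apply (refined_cover_psum_le N U delta s M Hs HU1)|].
    pose proof (psum_le_Series (qpow V s) N (qpow_nonneg V s) Hex).
    pose proof (psum_le_Series (fun n => dterm s (U n)) M (fun n => dterm_nonneg s (U n)) HU3).
    pose proof (psum_nonneg (qpow V s) N (qpow_nonneg V s)).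
    pose proof (psum_nonneg (fun n => dterm s (U n)) M (fun n => dterm_nonneg s (U n))).
    pose proof (Htail M).
    assert (psum (qpow V s) N * psum (fun n => dterm s (U n)) M <=
            Series (qpow V s) * Series (fun n => dterm s (U n))) by (apply Rmult_le_compat; auto).
    lra. }
  destruct (ex_series_of_psum_le _ _ (fun m => dterm_nonneg s _) Hp) as [HexW HleW].
  exists (refined_cover N U). split; [split; [|split]|]; auto.
  - apply refined_cover_diam; auto.
  - apply refined_cover_covers; auto.
Qed.

(* Iterating [refine_cover] multiplies the total mass by [Series (qpow V s) < 1] each time. *)
Lemma hnull_of_Series_lt_1 s : 0 < s -> ex_series (qpow V s) -> Series (qpow V s) < 1 -> hnull s C_V.
Proof.
  intros Hs Hex Hlt delta Hd eps He.
  set (Sg := Series (qpow V s)) in *.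
  assert (HSg : 0 <= Sg) by (apply Series_nonneg; auto using qpow_nonneg).
  destruct (exists_cover (fun i => V i = true) s delta Hs Hd) as [U0 HU0].
  set (s0 := Series (fun n => dterm s (U0 n))).
  assert (Hs0 : 0 <= s0) by (apply Series_nonneg; [intros; apply dterm_nonneg|apply HU0]).
  assert (Hiter : forall n, exists U, is_cover s delta C_V U /\
                    Series (fun m => dterm s (U m)) <= Sg ^ n * s0 + eps / 2).
  { induction n as [|n [U [HU HUs]]].
    - exists U0. split; auto. simpl. fold s0. lra.
    - destruct (refine_cover s delta U (eps * (1 - Sg) / 2) Hs Hd ltac:(nra) Hex HU) as (W & HW & HWs).
      exists W. split; auto. eapply Rle_trans; [exact HWs|]. fold Sg.
      assert (Sg * Series (fun m => dterm s (U m)) <= Sg * (Sg ^ n * s0 + eps / 2))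
        by (apply Rmult_le_compat_l; auto).
      simpl. nra. }
  destruct (pow_le_of_lt_1 Sg (eps / (2 * (s0 + 1))) ltac:(lra)) as [n Hn].
  { apply Rdiv_lt_0_compat; lra. }
  destruct (Hiter n) as (U & HU & HUs). exists U. split; auto.
  assert (Sg ^ n * s0 <= eps / 2).
  { apply Rle_trans with (eps / (2 * (s0 + 1)) * (s0 + 1)); [|right; field; lra].
    pose proof (pow_le Sg n HSg). apply Rmult_le_compat; lra. }
  lra.
Qed.

End UpperBound.

(** * Approximation by finite digit sets *)

Lemma stochastic_le_lt_1 (q : nat -> R) :
  (forall i, 0 < q i) -> is_series q 1 -> exists r, r < 1 /\ forall i, q i <= r.
Proof.
  intros Hq Hs.
  assert (Hq0 : forall i, 0 <= q i) by (intros; left; auto).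
  assert (HqS : Series q = 1) by (apply is_series_unique; auto).
  assert (Hpair : forall i j, (i < j)%nat -> q i + q j <= 1).
  { intros i j Hij. rewrite <- HqS.
    eapply Rle_trans; [apply (two_terms_le_psum q (S j) i j)|apply psum_le_Series]; auto.
    exists 1; auto. }
  exists (Rmax (1 - q 0%nat) (1 - q 1%nat)). split.
  - apply Rmax_lub_lt; pose proof (Hq 0%nat); pose proof (Hq 1%nat); lra.
  - intros [|[|i]].
    + pose proof (Hpair 0%nat 1%nat ltac:(lia)). eapply Rle_trans; [|apply Rmax_r]. lra.
    + pose proof (Hpair 0%nat 1%nat ltac:(lia)). eapply Rle_trans; [|apply Rmax_l]. lra.
    + pose proof (Hpair 0%nat (S (S i)) ltac:(lia)). eapply Rle_trans; [|apply Rmax_l]. lra.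
Qed.

Lemma is_lim_seq_incr_sup (u : nat -> R) (l : R) :
  (forall n, u n <= u (S n)) -> (forall n, u n <= l) -> (forall L, L < l -> exists n, L < u n) ->
  is_lim_seq u l.
Proof.
  intros Hincr Hle Hsup. apply is_lim_seq_spec. intros eps.
  destruct (Hsup (l - eps)) as [N HN]; [destruct eps; simpl; lra|].
  exists N. intros n Hn.
  assert (u N <= u n).
  { induction Hn; [lra|]. specialize (Hincr m). lra. }
  specialize (Hle n). apply Rabs_def1; lra.
Qed.

Section Main.

Variables q a : nat -> R.
Hypothesis hq_pos : forall i, 0 < q i.
Hypothesis hq_sum : is_series q 1.
Hypothesis ha_sub : forall i, 0 <= a i /\ a i + q i <= 1.
Hypothesis ha_disj : forall i j, i <> j -> forall x,
  ~ ((a i < x < a i + q i) /\ (a j < x < a j + q j)).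
Variable V : nat -> bool.
Variable e : nat -> nat.
Hypothesis he_inj : forall m n, e m = e n -> m = n.
Hypothesis he_range : forall i, V i = true <-> exists n, e n = i.
Hypothesis h_noroot : ~ exists x, 0 <= x <= 1 /\
  is_series (fun i => if V i then Rpower (q i) x else 0) 1.

Let F (k : nat) : list nat := map e (seq 0 k).
Let C (k : nat) : R -> Prop := GLS_set q a (fun i => exists j, (j < k)%nat /\ e j = i).
Let CV : R -> Prop := GLS_set q a (fun i => V i = true).

Lemma In_F k i : In i (F k) <-> exists j, (j < k)%nat /\ e j = i.
Proof.
  unfold F. rewrite in_map_iff. split.
  - intros (j & <- & Hj). apply in_seq in Hj. exists j; split; auto; lia.
  - intros (j & Hj & <-). exists j. split; auto. apply in_seq; lia.
Qed.

Lemma NoDup_F k : NoDup (F k).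
Proof. apply FinFun.Injective_map_NoDup; [intros x y; apply he_inj|apply seq_NoDup]. Qed.

Lemma C_subset_CV k x : C k x -> CV x.
Proof. apply GLS_set_mono. intros i (j & _ & <-). apply he_range. eauto. Qed.

Lemma C_subset_C_S k x : C k x -> C (S k) x.
Proof. apply GLS_set_mono. intros i (j & Hj & <-). exists j; split; auto. Qed.

Lemma q_lt_1 i : q i < 1.
Proof. destruct (stochastic_le_lt_1 q hq_pos hq_sum) as (r & Hr & Hq). specialize (Hq i). lra. Qed.

(* The only use of [h_noroot], at [x = 1]: it makes [C[GLS, V]] [H^1]-null, which [dimH_ge] needs. *)
Lemma Series_qpow_1_lt_1 : ex_series (qpow q V 1) /\ Series (qpow q V 1) < 1.
Proof.
  assert (Hb : forall M, psum (qpow q V 1) M <= 1).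
  { intros M. apply Rle_trans with (psum q M).
    - apply psum_le. intros i _. pose proof (hq_pos i). unfold qpow. destruct (V i); [rewrite Rpower_1|]; lra.
    - rewrite <- (is_series_unique q 1 hq_sum). apply psum_le_Series; [intros; left; auto|exists 1; auto]. }
  destruct (ex_series_of_psum_le _ 1 (qpow_nonneg q V 1) Hb) as [Hex [Hlt|Heq]]; [split; auto|].
  exfalso. apply h_noroot. exists 1. split; [lra|].
  pose proof (Series_correct _ Hex) as Hs. rewrite Heq in Hs. exact Hs.
Qed.

Lemma hnull_CV_1 : hnull 1 CV.
Proof. apply hnull_of_Series_lt_1; auto; [lra|apply Series_qpow_1_lt_1..]. Qed.

Lemma hnull_C_1 k : hnull 1 (C k).
Proof. apply (hnull_subset 1 _ CV), hnull_CV_1. apply C_subset_CV. Qed.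

Lemma dimH_C_ge k s : 0 < s <= 1 -> 1 <= lsum (fun i => Rpower (q i) s) (F k) -> s <= dimH (C k).
Proof.
  intros Hs Hsum. apply (dimH_ge _ 1); [lra|apply hnull_C_1|].
  intros s' Hs' Hn'. apply Rnot_lt_le. intros Hlt.
  apply (not_hnull_of_lsum_ge_1 q a hq_pos q_lt_1 ha_sub ha_disj (F k) s' (NoDup_F k)); [lra| |].
  - eapply Rle_trans; [exact Hsum|]. apply lsum_le. intros i _.
    apply Rpower_antitone_exp; [split; [|left; apply q_lt_1]|]; auto; lra.
  - apply (hnull_subset s' _ (C k)); auto. intros x. apply GLS_set_mono. intros i Hi. apply In_F; auto.
Qed.

Lemma psum_qpow_le_lsum_F s M : exists k, psum (qpow q V s) M <= lsum (fun i => Rpower (q i) s) (F k).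
Proof.
  assert (Hk : exists k, forall i, (i < M)%nat -> V i = true -> In i (F k)).
  { induction M as [|M [k Hk]]; [exists 0%nat; intros; lia|].
    destruct (V M) eqn:EV.
    - destruct (proj1 (he_range M) EV) as [j0 Hj0]. exists (Nat.max k (S j0)).
      intros i Hi HVi. apply In_F. destruct (Nat.eq_dec i M) as [->|Hne].
      + exists j0; split; auto; lia.
      + destruct (proj1 (In_F k i) (Hk i ltac:(lia) HVi)) as (j & Hj & Ej). exists j; split; auto; lia.
    - exists k. intros i Hi HVi. destruct (Nat.eq_dec i M) as [->|Hne]; [congruence|]. apply Hk; auto; lia. }
  destruct Hk as [k Hk]. exists k. unfold qpow. rewrite psum_filter.
  apply lsum_incl; [intros; left; apply Rpower_pos|apply NoDup_filter, seq_NoDup|].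
  intros i Hi. apply filter_In in Hi as [Hi HVi]. apply in_seq in Hi. apply Hk; auto; lia.
Qed.

Lemma Series_qpow_le_1 s : (forall k, lsum (fun i => Rpower (q i) s) (F k) < 1) ->
  ex_series (qpow q V s) /\ Series (qpow q V s) <= 1.
Proof.
  intros Hs. apply ex_series_of_psum_le; [apply qpow_nonneg|].
  intros M. destruct (psum_qpow_le_lsum_F s M) as [k Hk]. specialize (Hs k). lra.
Qed.

(* With [q i <= r < 1], raising the exponent from [s1] to [s2] shrinks every term by [r ^ (s2 - s1)]. *)
Lemma Series_qpow_lt_1 s1 s2 : s1 < s2 -> ex_series (qpow q V s1) -> Series (qpow q V s1) <= 1 ->
  ex_series (qpow q V s2) /\ Series (qpow q V s2) < 1.
Proof.
  intros Hs12 Hex Hle.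
  destruct (stochastic_le_lt_1 q hq_pos hq_sum) as (r & Hr & Hqr).
  assert (Hr0 : 0 < r) by (pose proof (hq_pos 0%nat); pose proof (Hqr 0%nat); lra).
  set (c := Rpower r (s2 - s1)).
  assert (Hc : 0 < c < 1) by (split; [apply Rpower_pos|apply Rpower_lt_1; lra]).
  assert (Hcmp : forall i, qpow q V s2 i <= c * qpow q V s1 i).
  { intros i. unfold qpow. destruct (V i); [|lra].
    replace s2 with (s1 + (s2 - s1)) at 1 by ring. rewrite Rpower_plus, Rmult_comm.
    apply Rmult_le_compat_r; [left; apply Rpower_pos|]. apply Rle_Rpower_l; [lra|split; auto]. }
  destruct (ex_series_of_psum_le (qpow q V s2) c (qpow_nonneg q V s2)) as [Hex2 Hle2].
  - intros M. eapply Rle_trans; [apply psum_le; intros; apply Hcmp|]. rewrite psum_scal.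
    pose proof (psum_le_Series _ M (qpow_nonneg q V s1) Hex). nra.
  - split; auto. lra.
Qed.

Lemma dimH_C_mono k : dimH (C k) <= dimH (C (S k)).
Proof. apply (dimH_subset _ _ 1); [apply C_subset_C_S|lra|apply hnull_C_1]. Qed.

Lemma dimH_C_le_dimH_CV k : dimH (C k) <= dimH CV.
Proof. apply (dimH_subset _ _ 1); [apply C_subset_CV|lra|apply hnull_CV_1]. Qed.

(* If [dim_H C_k <= L < D = dim_H C_V] for all [k], then at [s1 = L + (D - L)/3] every finite sum over
   [F k] is below 1, so the series at [s1] is at most 1 and the one at [s2 = L + 2 (D - L)/3] is
   below 1, whence [D <= s2]. *)
Lemma dimH_C_approx L : L < dimH CV -> exists k, L < dimH (C k).
Proof.
  intros HL. apply NNPP. intros Hno.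
  assert (Hall : forall k, dimH (C k) <= L) by (intros k; apply Rnot_lt_le; intros Hk; apply Hno; eauto).
  set (D := dimH CV) in *.
  assert (HL0 : 0 <= L) by (pose proof (Hall 0%nat); pose proof (dimH_nonneg _ 1 Rlt_0_1 (hnull_C_1 0)); lra).
  assert (HD1 : D <= 1) by (apply dimH_le_of_hnull; [lra|apply hnull_CV_1]).
  set (s1 := L + (D - L) / 3). set (s2 := L + 2 * (D - L) / 3).
  destruct (Series_qpow_le_1 s1) as [Hex1 Hle1].
  { intros k. apply Rnot_le_lt. intros Hge.
    pose proof (dimH_C_ge k s1 ltac:(unfold s1; split; lra) Hge). pose proof (Hall k). unfold s1 in *. lra. }
  destruct (Series_qpow_lt_1 s1 s2 ltac:(unfold s1, s2; lra) Hex1 Hle1) as [Hex2 Hlt2].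
  assert (D <= s2).
  { apply dimH_le_of_hnull; [unfold s2; lra|].
    apply hnull_of_Series_lt_1; auto. unfold s2; lra. }
  unfold s2 in *. lra.
Qed.

End Main.

Theorem theorem2
  (q a : nat -> R)
  (hq_pos : forall i, 0 < q i)
  (hq_sum : is_series q 1)
  (ha_sub : forall i, 0 <= a i /\ a i + q i <= 1)
  (ha_disj : forall i j, i <> j -> forall x,
      ~ ((a i < x < a i + q i) /\ (a j < x < a j + q j)))
  (V : nat -> bool) (e : nat -> nat)
  (he_inj : forall m n, e m = e n -> m = n)
  (he_range : forall i, V i = true <-> exists n, e n = i)
  (h_noroot : ~ exists x, 0 <= x <= 1 /\
      is_series (fun i => if V i then Rpower (q i) x else 0) 1) :
  is_lim_seq
    (fun k => dimH (GLS_set q a (fun i => exists j, (j < k)%nat /\ e j = i)))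
    (dimH (GLS_set q a (fun i => V i = true))).
Proof.
  apply is_lim_seq_incr_sup; intros;
    [eapply dimH_C_mono | eapply dimH_C_le_dimH_CV | eapply dimH_C_approx]; eassumption.
Qed.
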